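(* Let $\alpha=(\alpha_k)_{k\in\mathbb{N}}\in\ell^2$ and let $I=[a,b]$ be an interval in $\mathbb{N}$ ($a\le b$). Then $$\tfrac12 J(I)\le K(I)=\tfrac{1}{\sqrt2}L(I)\le 2J(I).$$
   Context: $\mathbb{N}=\{0,1,2,\dots\}$; intervals are sets $[a,b]\cap\mathbb{N}$. Notation: $\|f\|_{2,I}=(\sum_{k\in I}|f(k)|^2)^{1/2}$, $\mu(I)=\sum_{k\in I}|\alpha_k|^2$, $S_f(k)=\sum_{j=0}^k f(j)$, and for $\mu(I)>0$, $(S_f)_I=\mu(I)^{-1}\sum_{k\in I}S_f(k)|\alpha_k|^2$. $L(I)$: with $l(I,f)=\sum_{k\in I}\sum_{n\in I\setminus\{k\}}|\alpha_k\alpha_n\sum_{j=\min(k,n)+1}^{\max(k,n)}f(j)|^2$, set $L(I)=(\sup_{\|f\|_{2,I}\le1}l(I,f)/\mu(I))^{1/2}$ (sup over $f\in\ell^2$ supported in $I$), and $L(I)=0$ if $\alpha$ vanishes on $I$. $K(I)=\sup_{\|f\|_{2,I}\le1}\big(\sum_{k\in I}|S_f(k)-(S_f)_I|^2|\alpha_k|^2\big)^{1/2}$ (sup over $f\in\ell^2$ supported in $I$; this is $0$ if $\alpha$ vanishes on $I$). $J(I)=\inf_{c\in I}\max(A_c,B_c)$ where $A_c=\sup_{a\le s\le c}(c-s)^{1/2}(\sum_{k=a}^s|\alpha_k|^2)^{1/2}$ and $B_c=\sup_{c\le s\le b}(s-c)^{1/2}(\sum_{k=s}^b|\alpha_k|^2)^{1/2}$.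 *)

From HB Require Import structures.
From mathcomp Require Import all_boot all_order all_algebra.
From mathcomp Require Import all_classical all_reals all_analysis.
From mathcomp Require Import complex.
Set Implicit Arguments. Unset Strict Implicit. Unset Printing Implicit Defensive.
Import Order.TTheory GRing.Theory Num.Theory numFieldNormedType.Exports.
Local Open Scope ring_scope.
Local Open Scope classical_set_scope.
Local Open Scope complex_scope.

Section Defs.
Variable R : realType.
Implicit Types (alpha f : nat -> R[i]) (a b c k : nat).

Definition cabs (z : R[i]) : R := Normc.normc z.

Definition in_l2 alpha : Prop := cvgn (series (fun k : nat => (cabs (alpha k) ^+ 2 : R^o))).

Definition supported_in a b f : Prop := forall k, ~~ (a <= k <= b)%N -> f k = 0.

Definition norm2I a b f : R := Num.sqrt (\sum_(a <= k < b.+1) cabs (f k) ^+ 2).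

Definition muI alpha a b : R := \sum_(a <= k < b.+1) cabs (alpha k) ^+ 2.

Definition Sf f k : R[i] := \sum_(0 <= j < k.+1) f j.

(* (S_f)_I ; only used when mu(I) > 0 *)
Definition SfI alpha a b f : R[i] :=
  ((muI alpha a b)^-1)%:C * \sum_(a <= k < b.+1) Sf f k * ((cabs (alpha k)) ^+ 2)%:C.

Definition admissible a b f : Prop := supported_in a b f /\ norm2I a b f <= 1.

Definition lIf alpha a b f : R :=
  \sum_(a <= k < b.+1) \sum_(a <= n < b.+1 | n != k)
     cabs (alpha k * alpha n * \sum_((minn k n).+1 <= j < (maxn k n).+1) f j) ^+ 2.

Definition LI alpha a b : R :=
  if muI alpha a b == 0 then 0
  else Num.sqrt (sup [set lIf alpha a b f / muI alpha a b | f in admissible a b]).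

Definition KI alpha a b : R :=
  sup [set Num.sqrt (\sum_(a <= k < b.+1)
          cabs (Sf f k - SfI alpha a b f) ^+ 2 * cabs (alpha k) ^+ 2)
      | f in admissible a b].

Definition Ac alpha a c : R :=
  sup [set Num.sqrt ((c - s)%:R) * Num.sqrt (\sum_(a <= k < s.+1) cabs (alpha k) ^+ 2)
      | s in [set s : nat | (a <= s <= c)%N]].

Definition Bc alpha b c : R :=
  sup [set Num.sqrt ((s - c)%:R) * Num.sqrt (\sum_(s <= k < b.+1) cabs (alpha k) ^+ 2)
      | s in [set s : nat | (c <= s <= b)%N]].

Definition JI alpha a b : R :=
  inf [set Num.max (Ac alpha a c) (Bc alpha b c) | c in [set c : nat | (a <= c <= b)%N]].

End Defs.

From HB Require Import structures.
From mathcomp Require Import all_boot all_order all_algebra.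
From mathcomp Require Import all_classical all_reals all_analysis.
From mathcomp Require Import complex.
From mathcomp Require Import ring lra zify.
Set Implicit Arguments. Unset Strict Implicit. Unset Printing Implicit Defensive.
Import Order.TTheory GRing.Theory Num.Theory.
Local Open Scope ring_scope.
Local Open Scope complex_scope.
Local Open Scope classical_set_scope.

(* Write w_k = |alpha_k|^2 and let V(f) be the w-weighted variance of S_f on I, so that
   K(I)^2 is the supremum of V(f).  Expanding the double sum gives l(I,f) = 2 mu(I) V(f),
   whence L = sqrt 2 K.  For every c in I, V(f) is at most the w-weighted mean square
   deviation of S_f from S_f(c); on each side of c this is bounded by a weighted discrete
   Hardy inequality (constant 4, by Abel summation) whose weight condition is exactly
   A_c^2, resp. B_c^2.  Hence K <= 2 max(A_c, B_c) for all c, i.e. K <= 2 J.  Conversely,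
   let c be a w-median of I.  For s < c the normalised indicator of (s, c] is admissible
   and its partial sums are constant on [a, s] and on [c, b], both of mass at least
   mu([a, s]), so 2 V(f) >= (c - s) mu([a, s]); symmetrically for s > c.  Hence
   max(A_c, B_c) <= sqrt 2 K and J <= sqrt 2 K <= 2 K. *)

Section WeightedVariance.
Variable R : realFieldType.
Variables (w x : nat -> R) (m n : nat).

Definition wmean : R := (\sum_(m <= j < n) w j)^-1 * \sum_(m <= j < n) x j * w j.

Lemma sum_sqr_sub_expand z :
  \sum_(m <= k < n) (x k - z) ^+ 2 * w k =
  \sum_(m <= k < n) x k ^+ 2 * w k - 2 * z * \sum_(m <= k < n) x k * w k
   + z ^+ 2 * \sum_(m <= k < n) w k.
Proof. by rewrite !mulr_sumr -sumrB -big_split /=; apply: eq_bigr => k _; ring. Qed.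

Lemma sum_pair_sqr_sub : \sum_(m <= j < n) w j != 0 ->
  \sum_(m <= k < n) \sum_(m <= l < n) w k * w l * (x k - x l) ^+ 2 =
  2 * (\sum_(m <= j < n) w j) * \sum_(m <= k < n) (x k - wmean) ^+ 2 * w k.
Proof.
move=> mu0; rewrite sum_sqr_sub_expand /wmean.
set mu := \sum_(m <= j < n) w j; set S1 := \sum_(m <= k < n) x k * w k.
set S2 := \sum_(m <= k < n) x k ^+ 2 * w k.
have inner k : \sum_(m <= l < n) w k * w l * (x k - x l) ^+ 2 =
    S2 * w k - 2 * S1 * (x k * w k) + mu * (x k ^+ 2 * w k).
  transitivity (w k * \sum_(m <= l < n) (x l - x k) ^+ 2 * w l).
    by rewrite mulr_sumr; apply: eq_bigr => l _; ring.
  by rewrite sum_sqr_sub_expand -/S1 -/S2 -/mu; ring.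
rewrite (eq_bigr _ (fun k _ => inner k)) big_split sumrB /= -!mulr_sumr -/mu -/S1 -/S2.
by field.
Qed.

Hypothesis w_ge0 : forall k, 0 <= w k.

Lemma wmean_min z :
  \sum_(m <= k < n) (x k - wmean) ^+ 2 * w k <= \sum_(m <= k < n) (x k - z) ^+ 2 * w k.
Proof.
rewrite /wmean; set mu := \sum_(m <= j < n) w j.
have [mu0|mu_gt0] := eqVneq mu 0.
  have wI0 k : (m <= k < n)%N -> w k = 0.
    move=> kI; move/eqP: mu0; rewrite psumr_eq0 => [/allP/(_ k)|i _]; last exact: w_ge0.
    by rewrite mem_index_iota kI => /(_ isT)/eqP.
  by rewrite !big1_seq // => k; rewrite mem_index_iota => /wI0 ->; rewrite mulr0.
have {}mu_gt0 : 0 < mu by rewrite lt_def mu_gt0 sumr_ge0.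
rewrite !sum_sqr_sub_expand -/mu; set M := mu^-1 * _.
have -> : \sum_(m <= k < n) x k * w k = M * mu by rewrite /M mulrAC mulVf ?gt_eqF ?mul1r.
have := mulr_ge0 (ltW mu_gt0) (sqr_ge0 (z - M)); nra.
Qed.

(* Whatever the centre z, it is at distance at least X/2 from one of the two plateaus. *)
Lemma sum_sqr_sub_plateaus s0 s1 X z p :
  (m <= s0)%N -> (s0 < s1)%N -> (s1 <= n)%N ->
  (forall k, (k <= s0)%N -> x k = 0) -> (forall k, (s1 <= k)%N -> x k = X) ->
  0 <= p -> p <= \sum_(m <= k < s0.+1) w k -> p <= \sum_(s1 <= k < n) w k ->
  X ^+ 2 * p <= 2 * \sum_(m <= k < n) (x k - z) ^+ 2 * w k.
Proof.
move=> ms0 s01 s1n x0 xX p0 pL pR.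
have part (i j : nat) y : (forall k, (i <= k < j)%N -> x k = y) ->
    p <= \sum_(i <= k < j) w k -> (y - z) ^+ 2 * p <= \sum_(i <= k < j) (x k - z) ^+ 2 * w k.
  move=> xy pw; apply: le_trans (ler_wpM2l (sqr_ge0 _) pw) _.
  by rewrite mulr_sumr le_eqVlt; apply/orP; left; apply/eqP/eq_big_nat => k /xy ->.
have hL := part m s0.+1 0 (fun k kI => x0 k (ltnSE (proj2 (andP kI)))) pL.
have hR := part s1 n X (fun k kI => xX k (proj1 (andP kI))) pR.
have hM : 0 <= \sum_(s0.+1 <= k < s1) (x k - z) ^+ 2 * w k.
  by apply: sumr_ge0 => k _; rewrite mulr_ge0 ?sqr_ge0.
rewrite (big_cat_nat (leqW ms0) (leq_trans s01 s1n)) (big_cat_nat s01 s1n) /=.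
have := mulr_ge0 p0 (sqr_ge0 (2 * z - X)); nra.
Qed.

End WeightedVariance.

Section DiscreteHardy.
Variable R : realFieldType.
Variables (w g : nat -> R).
Local Notation P k := (\sum_(0 <= j < k) g j).

Lemma sum_mul_sqr_prefix_abel n :
  \sum_(0 <= i < n) w i * P i.+1 ^+ 2 =
  \sum_(0 <= k < n) (\sum_(k <= i < n) w i) * (P k.+1 ^+ 2 - P k ^+ 2).
Proof.
elim: n => [|n IH]; first by rewrite !big_geq.
rewrite big_nat_recr //= IH [RHS]big_nat_recr //= big_nat1.
have -> : \sum_(0 <= k < n) (\sum_(k <= i < n.+1) w i) * (P k.+1 ^+ 2 - P k ^+ 2)
   = \sum_(0 <= k < n) (\sum_(k <= i < n) w i) * (P k.+1 ^+ 2 - P k ^+ 2)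
     + w n * \sum_(0 <= k < n) (P k.+1 ^+ 2 - P k ^+ 2).
  rewrite mulr_sumr -big_split /=; apply: eq_big_nat => k /andP[_ kn].
  by rewrite big_nat_recr 1?ltnW //= mulrDl.
rewrite telescope_sumr // -addrA -mulrDr; congr (_ + _ * _).
by rewrite [P 0]big_geq // expr0n /= subr0 addrC subrK.
Qed.

Lemma hardy_step k :
  (P k.+1 ^+ 2 - P k ^+ 2) / k.+1%:R <=
  4 * g k ^+ 2 + (P k ^+ 2 / k%:R - P k.+1 ^+ 2 / k.+1%:R).
Proof.
rewrite big_nat_recr //=; case: k => [|k].
  rewrite big_geq // invr0 mulr0 !expr0n /= subr0 divr1 !add0r.
  have := sqr_ge0 (g 0%N); lra.
move: (P k.+1) (g k.+1) => x y.
have -> : k.+2%:R = k.+1%:R + 1 :> R by rewrite -natr1.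
have k0 : 0 < k.+1%:R :> R by rewrite ltr0n.
rewrite -subr_ge0.
have -> : 4 * y ^+ 2 + (x ^+ 2 / k.+1%:R - (x + y) ^+ 2 / (k.+1%:R + 1))
          - ((x + y) ^+ 2 - x ^+ 2) / (k.+1%:R + 1)
   = ((x - 2 * k.+1%:R * y) ^+ 2 + 2 * k.+1%:R * y ^+ 2) / (k.+1%:R * (k.+1%:R + 1)).
  by field; apply/andP; split; lra.
by rewrite divr_ge0 ?addr_ge0 ?sqr_ge0 ?(mulr_ge0 _ (sqr_ge0 _)) ?mulr_ge0 //; lra.
Qed.

Hypotheses (w_ge0 : forall k, 0 <= w k) (g_ge0 : forall k, 0 <= g k).

Lemma weighted_hardy n B :
  (forall s, (s < n)%N -> s.+1%:R * \sum_(s <= i < n) w i <= B) ->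
  \sum_(0 <= i < n) w i * P i.+1 ^+ 2 <= 4 * B * \sum_(0 <= i < n) g i ^+ 2.
Proof.
case: n => [|n] hB; first by rewrite !big_geq // mulr0.
have B0 : 0 <= B.
  by apply: le_trans (hB n _) => //; rewrite big_nat1 mulr_ge0.
pose Phi k := P k ^+ 2 / k%:R.
have Phi_ge0 k : 0 <= Phi k by rewrite divr_ge0 ?sqr_ge0.
have Phi_tele : \sum_(0 <= k < n.+1) (Phi k - Phi k.+1) = - Phi n.+1.
  rewrite -[LHS]opprK -sumrN (eq_bigr (fun k => Phi k.+1 - Phi k)) => [|k _]; last by rewrite opprB.
  by rewrite telescope_sumr // /Phi invr0 mulr0 subr0.
rewrite sum_mul_sqr_prefix_abel.
apply: (@le_trans _ _ (B * \sum_(0 <= k < n.+1) (4 * g k ^+ 2 + (Phi k - Phi k.+1)))).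
  rewrite mulr_sumr; apply: ler_sum_nat => k /andP[_ kn].
  have dP0 : 0 <= P k.+1 ^+ 2 - P k ^+ 2.
    by rewrite subr_ge0 ler_sqr ?nnegrE ?sumr_ge0 // big_nat_recr //= lerDl.
  apply: (@le_trans _ _ (B / k.+1%:R * (P k.+1 ^+ 2 - P k ^+ 2))).
    by apply: ler_wpM2r => //; rewrite ler_pdivlMr ?ltr0n // mulrC hB.
  by rewrite -mulrA ler_wpM2l // mulrC hardy_step.
rewrite big_split /= -mulr_sumr Phi_tele mulrDr mulrA [B * 4]mulrC.
by rewrite mulrN gerBl mulr_ge0.
Qed.

End DiscreteHardy.

Lemma sum_nat_shift0 (V : nmodType) (F : nat -> V) m n :
  \sum_(m <= k < n) F k = \sum_(0 <= i < n - m) F (i + m)%N.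
Proof. by rewrite -{1}[m]add0n big_addn. Qed.

Lemma sum_nat_reflect (V : nmodType) (F : nat -> V) m n N : (n <= N)%N ->
  \sum_(m <= k < n) F k = \sum_(N - n <= i < N - m) F (N - i.+1)%N.
Proof.
move=> nN; rewrite [RHS]sum_nat_shift0 (_ : N - m - (N - n) = n - m)%N; last by lia.
rewrite sum_nat_shift0 big_nat_rev /=.
by apply: eq_big_nat => i /andP[_ iI]; congr F; lia.
Qed.

Lemma sum_nat_indicator (V : nmodType) (v : V) m n s0 s1 :
  (m <= s0.+1)%N -> (s0 <= s1)%N -> (s1 < n)%N ->
  \sum_(m <= j < n) (if (s0 < j <= s1)%N then v else 0) = v *+ (s1 - s0).
Proof.
move=> ms0 s01 s1n; rewrite (big_cat_nat ms0 (leq_trans _ s1n)) //=.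
rewrite (big_cat_nat (_ : s0.+1 <= s1.+1)%N s1n) //= [X in X + _]big1_seq ?add0r; last first.
  by move=> j; rewrite mem_index_iota /= => /andP[_ js0]; rewrite ltnNge -ltnS js0.
rewrite [X in _ + X]big1_seq ?addr0; last first.
  by move=> j; rewrite mem_index_iota /= => /andP[s1j _]; rewrite (leqNgt j) s1j andbF.
rewrite (eq_big_nat _ _ (F2 := fun _ => v)) ?sumr_const_nat ?subSS //.
by move=> j ->.
Qed.

Section HardyOnIntervals.
Variable R : realFieldType.
Variables (w g : nat -> R).
Hypotheses (w_ge0 : forall k, 0 <= w k) (g_ge0 : forall k, 0 <= g k).

Lemma weighted_hardy_right c n B :
  (forall s, (c < s <= n)%N -> (s - c)%:R * \sum_(s <= k < n.+1) w k <= B) ->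
  \sum_(c.+1 <= k < n.+1) w k * (\sum_(c.+1 <= j < k.+1) g j) ^+ 2 <=
  4 * B * \sum_(c.+1 <= k < n.+1) g k ^+ 2.
Proof.
move=> hB; rewrite sum_nat_shift0 [X in _ <= _ * X]sum_nat_shift0 subSS.
under eq_bigr => i _ do rewrite sum_nat_shift0 -addSn addnK.
apply: (@weighted_hardy _ (fun i => w (i + c.+1)%N) (fun i => g (i + c.+1)%N)) => // s sn.
have := hB (s + c.+1)%N; rewrite big_addn subSS (_ : (s + c.+1 - c = s.+1)%N); last by lia.
by apply; lia.
Qed.

Lemma weighted_hardy_left m c A :
  (forall s, (m <= s < c)%N -> (c - s)%:R * \sum_(m <= k < s.+1) w k <= A) ->
  \sum_(m <= k < c) w k * (\sum_(k.+1 <= j < c.+1) g j) ^+ 2 <=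
  4 * A * \sum_(m.+1 <= k < c.+1) g k ^+ 2.
Proof.
move=> hA; rewrite (@sum_nat_reflect _ _ _ _ c) // [X in _ <= _ * X](@sum_nat_reflect _ _ _ _ c.+1) //.
rewrite !subSS subnn.
have inner i : (0 <= i < c - m)%N -> \sum_((c - i.+1).+1 <= j < c.+1) g j =
    \sum_(0 <= j < i.+1) g (c.+1 - j.+1)%N.
  move=> /andP[_ ic]; rewrite (@sum_nat_reflect _ _ _ _ c.+1) // subnn.
  by rewrite (_ : (c.+1 - (c - i.+1).+1 = i.+1)%N); last lia.
rewrite (eq_big_nat _ _ (fun i iI => congr1 (fun S => _ * S ^+ 2) (inner i iI))).
apply: (@weighted_hardy _ (fun i => w (c - i.+1)%N) (fun i => g (c.+1 - i.+1)%N)) => // s sc.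
have := hA (c - s.+1)%N; rewrite (@sum_nat_reflect _ _ _ _ c); last by lia.
rewrite (_ : (c - (c - s.+1) = s.+1)%N); last by lia.
rewrite (_ : (c - (c - s.+1).+1 = s)%N); last by lia.
by apply; lia.
Qed.

End HardyOnIntervals.

Lemma sqrtr_le (R : rcfType) (x y : R) : 0 <= y -> (Num.sqrt x <= y) = (x <= y ^+ 2).
Proof. by move=> y0; rewrite -(ler_sqrt x (sqr_ge0 y)) sqrtr_sqr ger0_norm. Qed.

Lemma sup_scale_sqr (R : realType) (T : Type) (P : set T) (v : T -> R) (k : R) :
  0 < k -> P !=set0 -> (forall t, P t -> 0 <= v t) -> has_ubound [set v t | t in P] ->
  sup [set k * v t ^+ 2 | t in P] = k * sup [set v t | t in P] ^+ 2.
Proof.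
move=> k0 [t0 Pt0] v0 ub; set S := sup [set v t | t in P].
have vS t : P t -> v t <= S.
  by move=> Pt; apply: sup_upper_bound; [split=> //; exists (v t0), t0 | exists t].
have S0 : 0 <= S := le_trans (v0 _ Pt0) (vS _ Pt0).
have kvS t : P t -> k * v t ^+ 2 <= k * S ^+ 2.
  by move=> Pt; rewrite ler_pM2l // ler_sqr ?nnegrE ?v0 ?vS.
have ne : [set k * v t ^+ 2 | t in P] !=set0 by exists (k * v t0 ^+ 2), t0.
apply/eqP; rewrite eq_le; apply/andP; split; first by apply: ge_sup => // _ [t Pt <-]; apply: kvS.
set S2 := sup _.
have kvS2 t : P t -> k * v t ^+ 2 <= S2.
  by move=> Pt; apply: sup_upper_bound; [split=> //; exists (k * S ^+ 2) => _ [u Pu <-]; apply: kvS | exists t].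
have S2_0 : 0 <= S2 := le_trans (mulr_ge0 (ltW k0) (sqr_ge0 _)) (kvS2 _ Pt0).
have S2k_ge0 : 0 <= S2 / k := divr_ge0 S2_0 (ltW k0).
have : S <= Num.sqrt (S2 / k).
  apply: ge_sup; first by exists (v t0), t0.
  move=> _ [t Pt <-]; rewrite -(ger0_norm (v0 _ Pt)) -sqrtr_sqr (ler_sqrt _ S2k_ge0).
  by rewrite ler_pdivlMr // mulrC kvS2.
move=> le_S; rewrite mulrC -ler_pdivlMr // -(sqr_sqrtr S2k_ge0).
by rewrite ler_sqr ?nnegrE ?sqrtr_ge0.
Qed.

Section ComplexModulus.
Variable R : realType.
Implicit Types (u v : R[i]).
Local Notation Re := (@complex.Re R).
Local Notation Im := (@complex.Im R).

Lemma cabs_ge0 u : 0 <= cabs u.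
Proof. by case: u => x y; rewrite /cabs sqrtr_ge0. Qed.

Lemma cabs0 : cabs (0 : R[i]) = 0.
Proof. exact: Normc.normc0. Qed.

Lemma cabs_sq u : cabs u ^+ 2 = Re u ^+ 2 + Im u ^+ 2.
Proof. by case: u => x y; rewrite /cabs sqr_sqrtr // addr_ge0 ?sqr_ge0. Qed.

Lemma cabs_sub_sq u v : cabs (u - v) ^+ 2 = (Re u - Re v) ^+ 2 + (Im u - Im v) ^+ 2.
Proof.
by rewrite cabs_sq (raddfB (Re : Rcomplex R -> R)) (raddfB (Im : Rcomplex R -> R)).
Qed.

Lemma cabsM u v : cabs (u * v) = cabs u * cabs v.
Proof. exact: Normc.normcM. Qed.

Lemma cabsB u v : cabs (u - v) = cabs (v - u).
Proof. by rewrite -opprB /cabs normcN. Qed.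

Lemma cabs_sum (F : nat -> R[i]) m n :
  cabs (\sum_(m <= i < n) F i) <= \sum_(m <= i < n) cabs (F i).
Proof.
elim/big_ind2: _ => [|u1 u2 x1 x2 h1 h2|//]; first by rewrite cabs0.
by apply: le_trans (le_normcD _ _) _; apply: lerD.
Qed.

Lemma Re_sum (F : nat -> R[i]) m n : Re (\sum_(m <= i < n) F i) = \sum_(m <= i < n) Re (F i).
Proof. exact: (raddf_sum (Re : Rcomplex R -> R)). Qed.

Lemma Im_sum (F : nat -> R[i]) m n : Im (\sum_(m <= i < n) F i) = \sum_(m <= i < n) Im (F i).
Proof. exact: (raddf_sum (Im : Rcomplex R -> R)). Qed.

Lemma Re_realCM (r : R) u : Re (r%:C * u) = r * Re u.
Proof. by case: u => x y /=; rewrite mul0r subr0. Qed.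

Lemma Im_realCM (r : R) u : Im (r%:C * u) = r * Im u.
Proof. by case: u => x y /=; rewrite mul0r addr0. Qed.

End ComplexModulus.

Section Interval.
Variable R : realType.
Local Notation Re := (@complex.Re R).
Local Notation Im := (@complex.Im R).
Variables (alpha : nat -> R[i]) (a b : nat).
Implicit Types (f : nat -> R[i]).
Local Notation w k := (cabs (alpha k) ^+ 2).

Definition varI f : R := \sum_(a <= k < b.+1) cabs (Sf f k - SfI alpha a b f) ^+ 2 * w k.

Lemma w_ge0 k : 0 <= w k. Proof. exact: sqr_ge0. Qed.

Lemma sum_w_ge0 m n : 0 <= \sum_(m <= k < n) w k.
Proof. by apply: sumr_ge0 => k _; apply: w_ge0. Qed.

Lemma sum_w_le_r m n1 n2 : (m <= n1 <= n2)%N ->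
  \sum_(m <= k < n1) w k <= \sum_(m <= k < n2) w k.
Proof. by move=> /andP[mn1 n12]; rewrite [leRHS](big_cat_nat mn1 n12) lerDl sum_w_ge0. Qed.

Lemma sum_w_le_l m1 m2 n : (m1 <= m2 <= n)%N ->
  \sum_(m2 <= k < n) w k <= \sum_(m1 <= k < n) w k.
Proof. by move=> /andP[m12 m2n]; rewrite [leRHS](big_cat_nat m12 m2n) lerDr sum_w_ge0. Qed.

Lemma varI_ge0 f : 0 <= varI f.
Proof. by apply: sumr_ge0 => k _; rewrite mulr_ge0 ?sqr_ge0. Qed.

Lemma Re_SfI f : Re (SfI alpha a b f) = wmean (fun k => w k) (fun k => Re (Sf f k)) a b.+1.
Proof.
rewrite /SfI Re_realCM Re_sum; congr (_ * _); apply: eq_bigr => k _.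
by rewrite mulrC Re_realCM mulrC.
Qed.

Lemma Im_SfI f : Im (SfI alpha a b f) = wmean (fun k => w k) (fun k => Im (Sf f k)) a b.+1.
Proof.
rewrite /SfI Im_realCM Im_sum; congr (_ * _); apply: eq_bigr => k _.
by rewrite mulrC Im_realCM mulrC.
Qed.

Lemma sum_cabs_sub_sq f z :
  \sum_(a <= k < b.+1) cabs (Sf f k - z) ^+ 2 * w k =
  \sum_(a <= k < b.+1) (Re (Sf f k) - Re z) ^+ 2 * w k +
  \sum_(a <= k < b.+1) (Im (Sf f k) - Im z) ^+ 2 * w k.
Proof. by rewrite -big_split /=; apply: eq_bigr => k _; rewrite cabs_sub_sq mulrDl. Qed.

Lemma varI_min f z : varI f <= \sum_(a <= k < b.+1) cabs (Sf f k - z) ^+ 2 * w k.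
Proof.
rewrite /varI !sum_cabs_sub_sq Re_SfI Im_SfI.
by apply: lerD; apply: wmean_min => k; apply: w_ge0.
Qed.

Lemma Sf_sub f p q : (p <= q)%N -> Sf f q - Sf f p = \sum_(p.+1 <= j < q.+1) f j.
Proof. by move=> pq; rewrite /Sf (big_cat_nat (leq0n p.+1)) //= addrC addrK. Qed.

Lemma lIf_eq f : muI alpha a b != 0 -> lIf alpha a b f = 2 * muI alpha a b * varI f.
Proof.
move=> mu0; rewrite /lIf.
have row k : \sum_(a <= n < b.+1 | n != k)
     cabs (alpha k * alpha n * \sum_((minn k n).+1 <= j < (maxn k n).+1) f j) ^+ 2 =
   \sum_(a <= n < b.+1) (w k * w n * (Re (Sf f k) - Re (Sf f n)) ^+ 2 +
                         w k * w n * (Im (Sf f k) - Im (Sf f n)) ^+ 2).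
  rewrite big_mkcond /=; apply: eq_bigr => n _.
  case: eqVneq => [->|_]; first by rewrite !subrr expr0n /= !mulr0 addr0.
  rewrite !cabsM !exprMn.
  have -> : cabs (\sum_((minn k n).+1 <= j < (maxn k n).+1) f j) = cabs (Sf f k - Sf f n).
    case: (leqP k n) => kn; last first.
      by rewrite -Sf_sub // ltnW.
    by rewrite -Sf_sub // cabsB.
  by rewrite cabs_sub_sq; ring.
under eq_bigr => k _ do rewrite row big_split /=.
rewrite big_split /= !sum_pair_sqr_sub //.
by rewrite /varI sum_cabs_sub_sq Re_SfI Im_SfI mulrDr.
Qed.

Lemma cabs_Sf_sub_le f k n : (k <= n)%N ->
  cabs (Sf f n - Sf f k) ^+ 2 <= (\sum_(k.+1 <= j < n.+1) cabs (f j)) ^+ 2.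
Proof.
move=> kn; have S0 : 0 <= \sum_(k.+1 <= j < n.+1) cabs (f j).
  by apply: sumr_ge0 => j _; apply: cabs_ge0.
by rewrite ler_sqr ?nnegrE ?cabs_ge0 // Sf_sub // cabs_sum.
Qed.

Lemma sum_dev_left_le f c A :
  (forall s, (a <= s <= c)%N -> (c - s)%:R * \sum_(a <= k < s.+1) w k <= A) ->
  \sum_(a <= k < c) cabs (Sf f k - Sf f c) ^+ 2 * w k <=
  4 * A * \sum_(a.+1 <= k < c.+1) cabs (f k) ^+ 2.
Proof.
move=> hA; apply: le_trans _ (weighted_hardy_left w_ge0 (fun j => cabs_ge0 (f j)) _).
  apply: ler_sum_nat => k /andP[_ kc]; rewrite mulrC ler_wpM2l ?w_ge0 // cabsB.
  exact/cabs_Sf_sub_le/ltnW.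
by move=> s /andP[sa sc]; apply: hA; rewrite sa ltnW.
Qed.

Lemma sum_dev_right_le f c B :
  (forall s, (c <= s <= b)%N -> (s - c)%:R * \sum_(s <= k < b.+1) w k <= B) ->
  \sum_(c.+1 <= k < b.+1) cabs (Sf f k - Sf f c) ^+ 2 * w k <=
  4 * B * \sum_(c.+1 <= k < b.+1) cabs (f k) ^+ 2.
Proof.
move=> hB; apply: le_trans _ (weighted_hardy_right w_ge0 (fun j => cabs_ge0 (f j)) _).
  apply: ler_sum_nat => k /andP[ck _]; rewrite mulrC ler_wpM2l ?w_ge0 //.
  exact/cabs_Sf_sub_le/ltnW.
by move=> s /andP[cs sb]; apply: hB; rewrite sb ltnW.
Qed.

Lemma varI_le_hardy f c A B : admissible a b f -> (a <= c <= b)%N ->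
  (forall s, (a <= s <= c)%N -> (c - s)%:R * \sum_(a <= k < s.+1) w k <= A) ->
  (forall s, (c <= s <= b)%N -> (s - c)%:R * \sum_(s <= k < b.+1) w k <= B) ->
  varI f <= 4 * Num.max A B.
Proof.
move=> [_ f1] /andP[ac cb] hA hB.
have A0 : 0 <= A by apply: le_trans (hA c _); rewrite ?subnn ?mul0r // ac leqnn.
have B0 : 0 <= B by apply: le_trans (hB c _); rewrite ?subnn ?mul0r // cb leqnn.
have cb1 : (c < b.+1)%N by rewrite ltnS.
set L := \sum_(a.+1 <= k < c.+1) cabs (f k) ^+ 2.
set Rs := \sum_(c.+1 <= k < b.+1) cabs (f k) ^+ 2.
have L0 : 0 <= L by apply: sumr_ge0 => k _; apply: sqr_ge0.
have R0 : 0 <= Rs by apply: sumr_ge0 => k _; apply: sqr_ge0.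
have LR1 : L + Rs <= 1.
  rewrite /L /Rs -big_cat_nat ?ltnS //; apply: le_trans (_ : \sum_(a <= k < b.+1) cabs (f k) ^+ 2 <= 1).
    by rewrite [leRHS](big_ltn (leq_ltn_trans ac cb1)) lerDr sqr_ge0.
  by rewrite -(ler_sqrt _ ler01) sqrtr1.
apply: le_trans (varI_min f (Sf f c)) _.
rewrite (big_cat_nat ac (leqW cb)) /= (big_ltn cb1) /= subrr cabs0 expr0n mul0r add0r.
apply: le_trans (lerD (sum_dev_left_le f hA) (sum_dev_right_le f hB)) _; rewrite -/L -/Rs.
have mA : A <= Num.max A B by rewrite le_max lexx.
have mB : B <= Num.max A B by rewrite le_max lexx orbT.
have : A * L + B * Rs <= Num.max A B * (L + Rs) by nra.
have : Num.max A B * (L + Rs) <= Num.max A B by nra.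
lra.
Qed.

Lemma exists_admissible_varI_ge s0 s1 p : (a <= s0)%N -> (s0 < s1)%N -> (s1 <= b)%N ->
  0 <= p -> p <= \sum_(a <= k < s0.+1) w k -> p <= \sum_(s1 <= k < b.+1) w k ->
  exists2 f, admissible a b f & (s1 - s0)%:R * p <= 2 * varI f.
Proof.
move=> as0 s01 s1b p0 pL pR.
set d : R := (s1 - s0)%:R.
have d_gt0 : 0 < d by rewrite ltr0n subn_gt0.
set r : R := (Num.sqrt d)^-1.
have r2d : r ^+ 2 * d = 1 by rewrite exprVn sqr_sqrtr ?mulVf ?gt_eqF ?ltW.
pose f j : R[i] := if (s0 < j <= s1)%N then r%:C else 0.
have Sf_low k : (k <= s0)%N -> Sf f k = 0.
  move=> ks0; rewrite /Sf big1_seq // => j; rewrite mem_index_iota /= => jk.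
  by rewrite /f ltnNge (leq_trans (ltnSE jk) ks0).
have Sf_high k : (s1 <= k)%N -> Sf f k = (r * d)%:C.
  by move=> s1k; rewrite /Sf sum_nat_indicator ?(ltnW s01) // -mulr_natr rmorphM rmorphMn.
exists f; first split.
- move=> j; apply: contraNeq; rewrite /f; case: ifP => [/andP[s0j js1] _|]; last by rewrite eqxx.
  by rewrite (leq_trans as0 (ltnW s0j)) (leq_trans js1 s1b).
- have fj j : cabs (f j) ^+ 2 = if (s0 < j <= s1)%N then r ^+ 2 else 0.
    by rewrite /f; case: ifP => _; rewrite cabs_sq /= expr0n addr0 // expr0n.
  rewrite /norm2I (eq_bigr _ (fun j _ => fj j)) sum_nat_indicator ?(ltnW s01) //; last by lia.
  by rewrite -mulr_natr r2d sqrtr1.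
set m := SfI alpha a b f.
have -> : d = (r * d) ^+ 2 by rewrite exprMn [d ^+ 2]expr2 mulrA r2d mul1r.
have x_low k : (k <= s0)%N -> Re (Sf f k) = 0 by move/Sf_low ->.
have x_high k : (s1 <= k)%N -> Re (Sf f k) = r * d by move/Sf_high ->.
apply: le_trans (@sum_sqr_sub_plateaus _ (fun k => w k) (fun k => Re (Sf f k)) a b.+1 w_ge0
  s0 s1 (r * d) (Re m) p as0 s01 (leqW s1b) x_low x_high p0 pL pR) _.
rewrite ler_pM2l // /varI; apply: ler_sum_nat => k _; rewrite ler_wpM2r ?w_ge0 //.
by rewrite cabs_sub_sq lerDl sqr_ge0.
Qed.

Lemma Ac_ub c s : (a <= s <= c)%N ->
  Num.sqrt (c - s)%:R * Num.sqrt (\sum_(a <= k < s.+1) w k) <= Ac alpha a c.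
Proof.
move=> hs; apply: sup_upper_bound; last by exists s.
split; first by exists (Num.sqrt (c - s)%:R * Num.sqrt (\sum_(a <= k < s.+1) w k)), s.
exists (Num.sqrt c%:R * Num.sqrt (\sum_(a <= k < c.+1) w k)) => _ [t /andP[a_t t_c] <-].
rewrite ler_pM ?sqrtr_ge0 ?ler_wsqrtr ?ler_nat ?leq_subr //.
by apply: sum_w_le_r; rewrite leqW.
Qed.

Lemma Bc_ub c s : (c <= s <= b)%N ->
  Num.sqrt (s - c)%:R * Num.sqrt (\sum_(s <= k < b.+1) w k) <= Bc alpha b c.
Proof.
move=> hs; apply: sup_upper_bound; last by exists s.
split; first by exists (Num.sqrt (s - c)%:R * Num.sqrt (\sum_(s <= k < b.+1) w k)), s.
exists (Num.sqrt b%:R * Num.sqrt (\sum_(c <= k < b.+1) w k)) => _ [t /andP[c_t t_b] <-].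
rewrite ler_pM ?sqrtr_ge0 ?ler_wsqrtr ?ler_nat ?(leq_trans (leq_subr _ _) t_b) //.
by apply: sum_w_le_l; rewrite c_t leqW.
Qed.

Lemma Ac_ge0 c : (a <= c)%N -> 0 <= Ac alpha a c.
Proof.
by move=> ac; have := @Ac_ub c c; rewrite ac leqnn subnn sqrtr0 mul0r; apply.
Qed.

Lemma Bc_ge0 c : (c <= b)%N -> 0 <= Bc alpha b c.
Proof.
by move=> cb; have := @Bc_ub c c; rewrite cb leqnn subnn sqrtr0 mul0r; apply.
Qed.

Lemma sqrt_varI_le f c : admissible a b f -> (a <= c <= b)%N ->
  Num.sqrt (varI f) <= 2 * Num.max (Ac alpha a c) (Bc alpha b c).
Proof.
move=> hf /andP[ac cb].
set A := Ac alpha a c; set B := Bc alpha b c.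
have A0 : 0 <= A by apply: Ac_ge0.
have B0 : 0 <= B by apply: Bc_ge0.
have M0 : 0 <= Num.max A B by rewrite le_max A0.
rewrite sqrtr_le ?mulr_ge0 //.
apply: le_trans (@varI_le_hardy f c (A ^+ 2) (B ^+ 2) hf _ _ _) _.
- by rewrite ac cb.
- by move=> s hs; rewrite -sqrtr_le ?sqrtrM ?Ac_ub.
- by move=> s hs; rewrite -sqrtr_le ?sqrtrM ?Bc_ub.
have : Num.max (A ^+ 2) (B ^+ 2) <= Num.max A B ^+ 2.
  by rewrite ge_max !ler_sqr ?nnegrE // !le_max !lexx ?orbT.
nra.
Qed.

Lemma admissible0 : admissible a b (fun _ => 0 : R[i]).
Proof. by split => //; rewrite /norm2I big1 ?sqrtr0 // => k _; rewrite cabs0 expr0n. Qed.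

Hypothesis hab : (a <= b)%N.

Lemma has_sup_sqrt_varI : has_sup [set Num.sqrt (varI f) | f in admissible a b].
Proof.
split; first by exists (Num.sqrt (varI (fun _ => 0 : R[i]))), (fun _ => 0 : R[i]); first exact: admissible0.
exists (2 * Num.max (Ac alpha a a) (Bc alpha b a)) => _ [f hf <-].
by apply: sqrt_varI_le; rewrite // leqnn.
Qed.

Lemma sqrt_varI_le_KI f : admissible a b f -> Num.sqrt (varI f) <= KI alpha a b.
Proof. by move=> hf; apply: sup_upper_bound; [exact: has_sup_sqrt_varI | exists f]. Qed.

Lemma KI_ge0 : 0 <= KI alpha a b.
Proof. by apply: le_trans _ (sqrt_varI_le_KI admissible0); apply: sqrtr_ge0. Qed.

Lemma KI_le_max_AcBc c : (a <= c <= b)%N ->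
  KI alpha a b <= 2 * Num.max (Ac alpha a c) (Bc alpha b c).
Proof.
move=> hc; apply: ge_sup; first by case: has_sup_sqrt_varI.
by move=> _ [f hf <-]; apply: sqrt_varI_le.
Qed.

Lemma KI_le_double_JI : KI alpha a b <= 2 * JI alpha a b.
Proof.
rewrite -ler_pdivrMl ?ltr0n //; apply: lb_le_inf.
  by exists (Num.max (Ac alpha a a) (Bc alpha b a)), a; rewrite //= leqnn.
by move=> _ [c hc <-]; rewrite ler_pdivrMl ?ltr0n // KI_le_max_AcBc.
Qed.

Lemma sqrt_mul_mass_le_sqrt2_KI s0 s1 p : (a <= s0)%N -> (s0 < s1)%N -> (s1 <= b)%N ->
  0 <= p -> p <= \sum_(a <= k < s0.+1) w k -> p <= \sum_(s1 <= k < b.+1) w k ->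
  Num.sqrt (s1 - s0)%:R * Num.sqrt p <= Num.sqrt 2 * KI alpha a b.
Proof.
move=> as0 s01 s1b p0 pL pR.
have [f hf hV] := exists_admissible_varI_ge as0 s01 s1b p0 pL pR.
rewrite -sqrtrM //; apply: le_trans (ler_wsqrtr hV) _.
by rewrite sqrtrM // ler_wpM2l ?sqrtr_ge0 ?sqrt_varI_le_KI.
Qed.

(* The witness is a median of the weights: the least c with mu([a, c]) >= mu(I) / 2. *)
Lemma exists_max_AcBc_le_sqrt2_KI : exists2 c, (a <= c <= b)%N &
  Num.max (Ac alpha a c) (Bc alpha b c) <= Num.sqrt 2 * KI alpha a b.
Proof.
pose mu := \sum_(a <= k < b.+1) w k.
have half_mu : mu / 2 <= mu by have := sum_w_ge0 a b.+1; rewrite -/mu; lra.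
have exP : exists c, (a <= c)%N && (mu / 2 <= \sum_(a <= k < c.+1) w k).
  by exists b; rewrite hab.
case: (ex_minnP exP) => c /andP[ac half_le] cmin.
have cb : (c <= b)%N by apply: cmin; rewrite hab.
have sK0 : 0 <= Num.sqrt 2 * KI alpha a b by rewrite mulr_ge0 ?sqrtr_ge0 ?KI_ge0.
exists c; first by rewrite ac cb.
rewrite ge_max; apply/andP; split.
  apply: ge_sup; first by exists 0, c; rewrite /= ?ac ?leqnn ?subnn ?sqrtr0 ?mul0r.
  move=> _ [s /andP[a_s s_c] <-]; case: (ltngtP s c) s_c => // [s_lt_c _ | -> _]; last first.
    by rewrite subnn sqrtr0 mul0r.
  have below : \sum_(a <= k < c) w k < mu / 2.
    rewrite ltNge; apply/negP => h.
    have : (c <= c.-1)%N by apply: cmin; rewrite prednK ?h ?andbT //; lia.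
    lia.
  have split_mu : mu = \sum_(a <= k < c) w k + \sum_(c <= k < b.+1) w k.
    by rewrite /mu (big_cat_nat (leq_trans a_s (ltnW s_lt_c)) (leqW cb)).
  have le_mass : \sum_(a <= k < s.+1) w k <= \sum_(a <= k < c) w k.
    by apply: sum_w_le_r; rewrite (leqW a_s) s_lt_c.
  by apply: (sqrt_mul_mass_le_sqrt2_KI a_s s_lt_c cb (sum_w_ge0 _ _) (lexx _)); lra.
apply: ge_sup; first by exists 0, c; rewrite /= ?cb ?leqnn ?subnn ?sqrtr0 ?mul0r.
move=> _ [s /andP[c_s s_b] <-]; case: (ltngtP c s) c_s => // [c_lt_s _ | <- _]; last first.
  by rewrite subnn sqrtr0 mul0r.
have split_mu : mu = \sum_(a <= k < c.+1) w k + \sum_(c.+1 <= k < b.+1) w k.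
  by rewrite /mu (big_cat_nat (leqW ac) (cb : c < b.+1)%N).
have le_mass : \sum_(s <= k < b.+1) w k <= \sum_(c.+1 <= k < b.+1) w k.
  by apply: sum_w_le_l; rewrite c_lt_s (leqW s_b).
by apply: (sqrt_mul_mass_le_sqrt2_KI ac c_lt_s s_b (sum_w_ge0 _ _) _ (lexx _)); lra.
Qed.

Lemma JI_le_sqrt2_KI : JI alpha a b <= Num.sqrt 2 * KI alpha a b.
Proof.
have [c hc le_c] := exists_max_AcBc_le_sqrt2_KI; apply: le_trans le_c.
apply: ge_inf; last by exists c.
exists 0 => _ [c' /andP[ac' _] <-].
by rewrite le_max Ac_ge0.
Qed.

Lemma LI_eq_sqrt2_KI : LI alpha a b = Num.sqrt 2 * KI alpha a b.
Proof.
rewrite /LI; case: eqP => [mu0 | /eqP mu0].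
  have w0 k : (a <= k < b.+1)%N -> w k = 0.
    move=> kI; move/eqP: mu0; rewrite /muI psumr_eq0 => [/allP/(_ k)|i _]; last exact: w_ge0.
    by rewrite mem_index_iota kI => /(_ isT)/eqP.
  suff -> : KI alpha a b = 0 by rewrite mulr0.
  apply/eqP; rewrite eq_le KI_ge0 andbT; apply: ge_sup; first by case: has_sup_sqrt_varI.
  move=> _ [f _ <-]; rewrite /varI big1_seq ?sqrtr0 // => k.
  by rewrite mem_index_iota /= => /w0 ->; rewrite mulr0.
rewrite (eq_imagel (f' := fun f => 2 * Num.sqrt (varI f) ^+ 2)); last first.
  by move=> f _; rewrite lIf_eq // sqr_sqrtr ?varI_ge0 // mulrAC mulfK.
rewrite (sup_scale_sqr (ltr0Sn R 1) (ex_intro _ _ admissible0) (fun f _ => sqrtr_ge0 _));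
  last by case: has_sup_sqrt_varI.
by rewrite sqrtrM ?ler0n // sqrtr_sqr ger0_norm ?KI_ge0.
Qed.

End Interval.

Theorem lemma3p6 (R : realType) (alpha : nat -> R[i]) (a b : nat) :
  in_l2 alpha -> (a <= b)%N ->
  JI alpha a b / 2 <= KI alpha a b /\
  KI alpha a b = LI alpha a b / Num.sqrt 2 /\
  KI alpha a b <= 2 * JI alpha a b.
Proof.
move=> _ hab.
have K0 := KI_ge0 alpha hab.
have sqrt2_gt0 : 0 < Num.sqrt 2 :> R by rewrite sqrtr_gt0 ltr0n.
have sqrt2_le2 : Num.sqrt 2 <= 2 :> R by rewrite sqrtr_le //; lra.
split; last split; last exact: KI_le_double_JI.
  have := JI_le_sqrt2_KI alpha hab; have := ler_wpM2r K0 sqrt2_le2; lra.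
by rewrite LI_eq_sqrt2_KI // mulrC mulKf ?gt_eqF.
Qed.
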